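(* Let $\mathcal G$ be a finite connected groupoid and $\alpha=(S_g,\alpha_g)_{g\in\mathcal G}$ a unital group-type partial action of $\mathcal G$ on a ring $S=\bigoplus_{y\in\mathcal G_0}S_y$, with $S_g=S1_g$ and $1_g\neq0$ for all $g$. Let $\mathcal H\in\mathrm{wSub}_\alpha(\mathcal G)$, with connected components $\mathcal H_1,\dots,\mathcal H_r$ having object sets $Y_1,\dots,Y_r$, choose $y_j\in Y_j$, and let $T=S^{\alpha_{\mathcal H}}$ and $T_{y_j}=S_{y_j}^{\alpha_{\mathcal H_j(y_j)}}$. Then: (i) $\mathcal G_T$ is a wide subgroupoid of $\mathcal G$ if and only if $\mathcal G(y_j)_{T_{y_j}}$ is a subgroup of $\mathcal G(y_j)$ for all $1\le j\le r$; (ii) $\mathcal G_T=\mathcal H$ if and only if $\mathcal G(y_j)_{T_{y_j}}=\mathcal H_j(y_j)$ for all $1\le j\le r$.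
   Context: A groupoid is a small category with all morphisms invertible; $\mathcal G_0$ is its object set (identified with identity morphisms), $s(g),t(g)$ source and target, $\mathcal G(x,y)=\{g:s(g)=x,t(g)=y\}$, $\mathcal G(x)=\mathcal G(x,x)$; $gh$ defined iff $s(g)=t(h)$; connected means all $\mathcal G(x,y)\ne\emptyset$; connected components are full subgroupoids on classes of $x\sim y\iff\mathcal G(x,y)\neq\emptyset$; a subgroupoid is wide if it contains all of $\mathcal G_0$. A partial action $\alpha=(S_g,\alpha_g)_{g\in\mathcal G}$ on a ring $S$: for each $g$, $S_{t(g)}$ is an ideal of $S$, $S_g$ an ideal of $S_{t(g)}$, $\alpha_g:S_{g^{-1}}\to S_g$ a ring isomorphism; $\alpha_x=\mathrm{id}_{S_x}$; for composable $(g,h)$, $\alpha_h^{-1}(S_{g^{-1}}\cap S_h)\subseteq S_{(gh)^{-1}}$ and $\alpha_g\alpha_h(a)=\alpha_{gh}(a)$ there. Unital: $S_g=S1_g$, $1_g$ central idempotent. A transversal for $x$ in a connected groupoid $\mathcal K$ is $\{\tau_y\}_{y\in\mathcal K_0}$ with $\tau_y\in\mathcal K(x,y)$, $\tau_x=x$; a partial action of connected $\mathcal K$ on $A=\bigoplus_{y\in\mathcal K_0}A_y$ is group-type if some $x$ and transversal satisfy $A_{\tau_y^{-1}}=A_x$, $A_{\tau_y}=A_y$ for all $y$; for non-connected $\mathcal K$ it is group-type if each restriction to a connected component $\mathcal K_Y$ (acting on $\bigoplus_{y\in Y}A_y$) is group-type. For a subgroupoid $\mathcal H$, $\alpha_{\mathcal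 H}=(S_h,\alpha_h)_{h\in\mathcal H}$ acts on $\bigoplus_{z\in\mathcal H_0}S_z$. $\mathrm{wSub}_\alpha(\mathcal G)$ is the set of wide subgroupoids $\mathcal H$ with $\alpha_{\mathcal H}$ group-type. For a subgroupoid $\mathcal K$ and subring $A\subseteq S$, $A^{\alpha_{\mathcal K}}=\{a\in A:\alpha_k(a1_{k^{-1}})=a1_k\ \forall k\in\mathcal K\}$. For a subring $T\subseteq S$, $\mathcal G_T=\{g\in\mathcal G:\alpha_g(t1_{g^{-1}})=t1_g\ \forall t\in T\}$; for $y\in\mathcal G_0$ and a subring $B\subseteq S_y$, $\mathcal G(y)_B=\{l\in\mathcal G(y):\alpha_l(b1_{l^{-1}})=b1_l\ \forall b\in B\}$. *)

From mathcomp Require Import all_boot all_algebra.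
Set Implicit Arguments. Unset Strict Implicit. Unset Printing Implicit Defensive.
Import GRing.Theory.
Local Open Scope ring_scope.

(* A finite groupoid: objects Ob, morphisms Mor; objects are identified with
   identity morphisms via idm.  comp g h = gh is meaningful iff src g = tgt h. *)
Record groupoid := Groupoid {
  Ob : finType;
  Mor : finType;
  src : Mor -> Ob;
  tgt : Mor -> Ob;
  idm : Ob -> Mor;
  comp : Mor -> Mor -> Mor;
  ginv : Mor -> Mor;
  src_idm : forall x, src (idm x) = x;
  tgt_idm : forall x, tgt (idm x) = x;
  src_comp : forall g h, src g = tgt h -> src (comp g h) = src h;
  tgt_comp : forall g h, src g = tgt h -> tgt (comp g h) = tgt g;
  compA : forall g h k, src g = tgt h -> src h = tgt k ->
            comp g (comp h k) = comp (comp g h) k;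
  comp_idl : forall g, comp (idm (tgt g)) g = g;
  comp_idr : forall g, comp g (idm (src g)) = g;
  src_ginv : forall g, src (ginv g) = tgt g;
  tgt_ginv : forall g, tgt (ginv g) = src g;
  comp_ginvr : forall g, comp g (ginv g) = idm (tgt g);
  comp_ginvl : forall g, comp (ginv g) g = idm (src g)
}.

Section Defs.
Variable G : groupoid.

Definition connected : Prop :=
  forall x y : Ob G, exists g : Mor G, src g = x /\ tgt g = y.

Definition subgroupoid (P : Mor G -> Prop) : Prop :=
  (exists g, P g) /\
  (forall g h, P g -> P h -> src g = tgt h -> P (comp g h)) /\
  (forall g, P g -> P (ginv g)).

Definition wide_subgroupoid (P : Mor G -> Prop) : Prop :=
  subgroupoid P /\ forall x : Ob G, P (idm x).

Definition isotropy_subgroup (y : Ob G) (P : Mor G -> Prop) : Prop :=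
  (forall l, P l -> src l = y /\ tgt l = y) /\
  P (idm y) /\
  (forall l m, P l -> P m -> P (comp l m)) /\
  (forall l, P l -> P (ginv l)).

Definition hrel (H : Mor G -> Prop) (x y : Ob G) : Prop :=
  exists h, H h /\ src h = x /\ tgt h = y.

Definition component (H : Mor G -> Prop) (y : Ob G) (h : Mor G) : Prop :=
  H h /\ hrel H y (src h) /\ hrel H y (tgt h).

Definition isotropy (K : Mor G -> Prop) (y : Ob G) (h : Mor G) : Prop :=
  K h /\ src h = y /\ tgt h = y.

Variable R : pzRingType.
Variable one : Mor G -> R.
Variable act : Mor G -> R -> R.     (* g |-> alpha_g (total function; only its
                                       restriction to S_{g^-1} matters) *)

Definition inS (g : Mor G) (a : R) : Prop := exists b, a = b * one g.

Definition ideal_eq (g h : Mor G) : Prop := forall a, inS g a <-> inS h a.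

Definition direct_sum_decomp : Prop :=
  (forall s : R, exists f : Ob G -> R,
       (forall y, inS (idm y) (f y)) /\ s = \sum_(y : Ob G) f y) /\
  (forall f : Ob G -> R, (forall y, inS (idm y) (f y)) ->
       \sum_(y : Ob G) f y = 0 -> forall y, f y = 0).

Definition unital_partial_action : Prop :=
  (forall g, one g * one g = one g) /\
  (forall g a, a * one g = one g * a) /\
  (* S_g is an ideal of S_{t(g)} (S_{t(g)} = S 1_{t(g)} is an ideal of S) *)
  (forall g a, inS g a -> inS (idm (tgt g)) a) /\
  (forall g a, inS (ginv g) a -> inS g (act g a)) /\
  (forall g a b, inS (ginv g) a -> inS (ginv g) b ->
       act g (a + b) = act g a + act g b) /\
  (forall g a b, inS (ginv g) a -> inS (ginv g) b ->
       act g (a * b) = act g a * act g b) /\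
  (forall g a b, inS (ginv g) a -> inS (ginv g) b ->
       act g a = act g b -> a = b) /\
  (forall g c, inS g c -> exists a, inS (ginv g) a /\ act g a = c) /\
  (forall x a, inS (idm x) a -> act (idm x) a = a) /\
  (forall g h a, src g = tgt h -> inS (ginv h) a -> inS (ginv g) (act h a) ->
       inS (ginv (comp g h)) a /\ act g (act h a) = act (comp g h) a).

Definition group_type_on (K : Mor G -> Prop) (Y : Ob G -> Prop) : Prop :=
  exists x, Y x /\ exists tau : Ob G -> Mor G,
    tau x = idm x /\
    forall y, Y y ->
      K (tau y) /\ src (tau y) = x /\ tgt (tau y) = y /\
      ideal_eq (ginv (tau y)) (idm x) /\ ideal_eq (tau y) (idm y).

Definition group_type_sub (H : Mor G -> Prop) : Prop :=
  forall y, group_type_on (component H y) (hrel H y).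

Definition wSub (H : Mor G -> Prop) : Prop :=
  wide_subgroupoid H /\ group_type_sub H.

Definition fixed_ring (K : Mor G -> Prop) (A : R -> Prop) (a : R) : Prop :=
  A a /\ forall k, K k -> act k (a * one (ginv k)) = a * one k.

Definition G_fix (T : R -> Prop) (g : Mor G) : Prop :=
  forall t, T t -> act g (t * one (ginv g)) = t * one g.

Definition Gy_fix (y : Ob G) (B : R -> Prop) (l : Mor G) : Prop :=
  src l = y /\ tgt l = y /\
  forall b, B b -> act l (b * one (ginv l)) = b * one l.

End Defs.

(** Whether [g] fixes [a] only depends on the components [a 1_(src g)] and [a 1_(tgt g)].
    Hence, on loops at [y], membership in [G_T] and in [G(y)_(T_y)] agree, because
    [t |-> t 1_y] maps [T] onto [T_y]: a preimage of [b] is [sum_(v ~ y) alpha_(F v)(b)],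
    where [F] is a transversal at [y] of full morphisms of [H], provided by the group-type
    hypothesis.  Since [1_g <> 0], every [g] in [G_T] stays inside one component of [H],
    and conjugating it by the transversal gives a loop [F(t g)^-1 g F(s g)] at the chosen
    representative [y]; this transport is multiplicative and preserves membership in
    [G_T] and in [H], so both equivalences reduce to statements about these loops. *)

From Pilot Require Import Defs.
From mathcomp Require Import all_boot all_algebra.
From Stdlib Require Import Classical ClassicalEpsilon.
(* Re-exposes the groupoid's [comp], shadowed by ssrfun's function composition. *)
Import Defs.
Set Implicit Arguments. Unset Strict Implicit. Unset Printing Implicit Defensive.
Import GRing.Theory.
Local Open Scope ring_scope.

Section GroupoidTheory.
Variable G : groupoid.
Implicit Types (f g h : Mor G) (x : Ob G).

Lemma ginvK : involutive (@ginv G).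
Proof.
move=> g; have gg : comp (ginv (ginv g)) (ginv g) = idm (tgt g).
  by rewrite comp_ginvl src_ginv.
rewrite -[in RHS](comp_idl g) -gg -compA ?src_ginv ?tgt_ginv // comp_ginvl.
by rewrite -[src g](tgt_ginv g) -src_ginv comp_idr.
Qed.

Lemma ginv_idm x : ginv (idm x) = idm x.
Proof.
have := comp_idr (ginv (idm x)); rewrite src_ginv tgt_idm => <-.
by rewrite comp_ginvl src_idm.
Qed.

Lemma compKg f g : src f = tgt g -> comp (ginv f) (comp f g) = g.
Proof. by move=> fg; rewrite compA ?src_ginv ?tgt_ginv // comp_ginvl fg comp_idl. Qed.

Lemma compKVg f g : tgt f = tgt g -> comp f (comp (ginv f) g) = g.
Proof. by move=> fg; rewrite -{1}(ginvK f) compKg // src_ginv. Qed.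

Lemma compgK f g : src g = tgt f -> comp (comp g f) (ginv f) = g.
Proof. by move=> gf; rewrite -compA ?tgt_ginv // comp_ginvr -gf comp_idr. Qed.

Lemma ginv_comp g h : src g = tgt h -> ginv (comp g h) = comp (ginv h) (ginv g).
Proof.
move=> gh; have sgh : src (ginv (comp g h)) = tgt g by rewrite src_ginv tgt_comp.
rewrite -[LHS](compgK sgh); congr (comp _ (ginv g)).
have sh : src (comp (ginv (comp g h)) g) = tgt h by rewrite src_comp.
rewrite -[LHS](compgK sh) -[comp (comp _ g) h]compA ?src_ginv ?tgt_comp //.
by rewrite comp_ginvl src_comp // -(tgt_ginv h) comp_idl.
Qed.

Definition gconj f g f' := comp (ginv f) (comp g f').

Section Conj.
Variables f g f' : Mor G.
Hypotheses (fg : tgt f = tgt g) (gf' : src g = tgt f').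

Let inv_f_gf' : src (ginv f) = tgt (comp g f').
Proof. by rewrite src_ginv tgt_comp. Qed.

Lemma src_gconj : src (gconj f g f') = src f'.
Proof. by rewrite /gconj !src_comp. Qed.

Lemma tgt_gconj : tgt (gconj f g f') = src f.
Proof. by rewrite /gconj tgt_comp // tgt_ginv. Qed.

Lemma gconjK : comp f (comp (gconj f g f') (ginv f')) = g.
Proof.
rewrite /gconj -compA ?src_comp ?tgt_ginv // compgK // compKVg //.
Qed.

Lemma gconj_comp h f'' : tgt h = tgt f' -> src h = tgt f'' ->
  comp (gconj f g f') (gconj f' h f'') = gconj f (comp g h) f''.
Proof.
move=> hf' hf''; have gh : src g = tgt h by rewrite gf' hf'.
have f'hf'' : src (ginv f') = tgt (comp h f'') by rewrite src_ginv tgt_comp.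
rewrite /gconj -compA ?src_comp ?(tgt_comp f'hf'') ?tgt_ginv //; congr (comp (ginv f) _).
by rewrite -compA ?(tgt_comp f'hf'') ?tgt_ginv // compKVg ?tgt_comp // compA.
Qed.

End Conj.

Section Subgroupoid.
Variable P : Mor G -> Prop.
Hypothesis sP : subgroupoid P.

Lemma subgroupoid_comp g h : P g -> P h -> src g = tgt h -> P (comp g h).
Proof. by case: sP => _ [+ _]; apply. Qed.

Lemma subgroupoid_inv g : P g -> P (ginv g).
Proof. by case: sP => _ [_]; apply. Qed.

Lemma subgroupoid_gconj f g f' : P f -> P f' -> tgt f = tgt g -> src g = tgt f' ->
  P (gconj f g f') <-> P g.
Proof.
move=> Pf Pf' fg gf'; split=> [Pc|Pg].
  rewrite -(gconjK fg gf'); apply: subgroupoid_comp => //.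
    by apply: subgroupoid_comp; rewrite ?tgt_ginv ?src_gconj //; apply: subgroupoid_inv.
  by rewrite tgt_comp ?tgt_gconj // tgt_ginv src_gconj.
by apply: subgroupoid_comp; [apply: subgroupoid_inv | apply: subgroupoid_comp |
  rewrite src_ginv tgt_comp].
Qed.

Lemma hrel_sym x y : hrel P x y -> hrel P y x.
Proof.
case=> h [Ph [<- <-]]; exists (ginv h).
by rewrite src_ginv tgt_ginv; split=> //; apply: subgroupoid_inv.
Qed.

Lemma hrel_trans x y z : hrel P x y -> hrel P y z -> hrel P x z.
Proof.
case=> h [Ph [<- hy]] [k [Pk [ky <-]]]; have kh : src k = tgt h by rewrite ky hy.
by exists (comp k h); rewrite src_comp ?tgt_comp //; split=> //; apply: subgroupoid_comp.
Qed.

End Subgroupoid.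

Lemma hrel_refl P x : wide_subgroupoid P -> hrel P x x.
Proof. by case=> _ Pid; exists (idm x); rewrite src_idm tgt_idm. Qed.

End GroupoidTheory.

Section PartialAction.
Variables (G : groupoid) (R : pzRingType) (one : Mor G -> R) (act : Mor G -> R -> R).
Hypothesis upa : unital_partial_action one act.
Implicit Types (f g h k : Mor G) (x y v : Ob G) (a b t : R).
Local Notation e y := (one (idm y)).

Lemma one_idem g : one g * one g = one g.
Proof. by have [P _] := upa; apply: P. Qed.

Lemma one_central g a : a * one g = one g * a.
Proof. by have [_ [P _]] := upa; apply: P. Qed.

Lemma inS_tgt g a : inS one g a -> inS one (idm (tgt g)) a.
Proof. by have [_ [_ [P _]]] := upa; apply: P. Qed.

Lemma act_inS g a : inS one (ginv g) a -> inS one g (act g a).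
Proof. by have [_ [_ [_ [P _]]]] := upa; apply: P. Qed.

Lemma actD g a b : inS one (ginv g) a -> inS one (ginv g) b ->
  act g (a + b) = act g a + act g b.
Proof. by have [_ [_ [_ [_ [P _]]]]] := upa; apply: P. Qed.

Lemma actM g a b : inS one (ginv g) a -> inS one (ginv g) b ->
  act g (a * b) = act g a * act g b.
Proof. by have [_ [_ [_ [_ [_ [P _]]]]]] := upa; apply: P. Qed.

Lemma act_surj g b : inS one g b -> exists2 a, inS one (ginv g) a & act g a = b.
Proof.
have [_ [_ [_ [_ [_ [_ [_ [P _]]]]]]]] := upa.
by case/P=> a [dom_a <-]; exists a.
Qed.

Lemma act_idm x a : inS one (idm x) a -> act (idm x) a = a.
Proof. by have [_ [_ [_ [_ [_ [_ [_ [_ [P _]]]]]]]]] := upa; apply: P. Qed.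

Lemma act_comp g h a : src g = tgt h -> inS one (ginv h) a -> inS one (ginv g) (act h a) ->
  inS one (ginv (comp g h)) a /\ act g (act h a) = act (comp g h) a.
Proof. by have [_ [_ [_ [_ [_ [_ [_ [_ [_ P]]]]]]]]] := upa; apply: P. Qed.

Lemma inSE g a : inS one g a <-> a * one g = a.
Proof. by split=> [[b ->]|<-]; [rewrite -mulrA one_idem | exists a]. Qed.

Lemma inS_mulr g a : inS one g (a * one g).
Proof. by exists a. Qed.

Lemma inS_one g : inS one g (one g).
Proof. by exists 1; rewrite mul1r. Qed.

Lemma inS0 g : inS one g 0.
Proof. by exists 0; rewrite mul0r. Qed.

Lemma ideal_eq_one g h : ideal_eq one g h -> one g = one h.
Proof.
move=> gh; have /inSE hg : inS one h (one g) by apply/gh/inS_one.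
have /inSE <- : inS one g (one h) by apply/gh/inS_one.
by rewrite one_central.
Qed.

Lemma mul_one_tgt g a : a * one g = a * e (tgt g) * one g.
Proof.
have /inSE : inS one (idm (tgt g)) (one g) by apply/inS_tgt/inS_one.
by rewrite -mulrA one_central => ->.
Qed.

Lemma mul_one_src g a : a * one (ginv g) = a * e (src g) * one (ginv g).
Proof. by rewrite -(tgt_ginv g) mul_one_tgt. Qed.

Lemma act0 g : act g 0 = 0.
Proof. by apply/(@addrI _ (act g 0)); rewrite -actD ?addr0 //; apply: inS0. Qed.

Lemma act_one g : act g (one (ginv g)) = one g.
Proof.
have [a /inSE dom_a act_a] := act_surj (inS_one g).
have /inSE <- : inS one g (act g (one (ginv g))) by apply/act_inS/inS_one.
by rewrite -act_a -actM -?one_central ?dom_a //; [apply: inS_one | apply/inSE].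
Qed.

Definition fixes g a := act g (a * one (ginv g)) = a * one g.

Lemma eq_fixes g a a' : a * e (src g) = a' * e (src g) ->
  a * e (tgt g) = a' * e (tgt g) -> fixes g a <-> fixes g a'.
Proof.
move=> eq_src eq_tgt.
by rewrite /fixes (mul_one_src g a) eq_src -mul_one_src (mul_one_tgt g a) eq_tgt -mul_one_tgt.
Qed.

Lemma fixes_idm x a : fixes (idm x) a.
Proof. by rewrite /fixes ginv_idm act_idm //; apply: inS_mulr. Qed.

Lemma fixes_ginv g a : fixes g a -> fixes (ginv g) a.
Proof.
rewrite /fixes ginvK => fix_a; rewrite -fix_a.
have dom : inS one (ginv (ginv g)) (act g (a * one (ginv g))).
  by rewrite ginvK; apply/act_inS/inS_mulr.
have [_ ->] := act_comp (src_ginv g) (inS_mulr _ _) dom.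
rewrite comp_ginvl act_idm // -(tgt_ginv g); exact/inS_tgt/inS_mulr.
Qed.

(** For full [f], [alpha_f] is an isomorphism [S_(src f) -> S_(tgt f)]; the transversals
    of a group-type action are full. *)
Definition full f := one f = e (tgt f) /\ one (ginv f) = e (src f).

Lemma full_ginv f : full f -> full (ginv f).
Proof. by case=> ff fi; split; rewrite ?ginvK ?tgt_ginv ?src_ginv. Qed.

Lemma act_inS_full f a : full f -> inS one (idm (src f)) a -> inS one (idm (tgt f)) (act f a).
Proof. by case=> ft fi; rewrite /inS -ft -fi; apply: act_inS. Qed.

Section FullComp.
Variables f g : Mor G.
Hypotheses (ff : full f) (fg : src f = tgt g).

Let range_g_in_dom_f a : inS one (ginv g) a -> inS one (ginv f) (act g a).
Proof. by case: ff => _ fi; rewrite /inS fi fg => /act_inS /inS_tgt. Qed.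

Lemma inS_ginv_full_comp a : inS one (ginv (comp f g)) a <-> inS one (ginv g) a.
Proof.
split=> dom_a; last by case: (act_comp fg dom_a (range_g_in_dom_f dom_a)).
have fgf : src (ginv f) = tgt (comp f g) by rewrite src_ginv tgt_comp.
have := act_comp fgf dom_a; rewrite compKg // ginvK; case=> //.
by case: ff => ft _; rewrite /inS ft -(tgt_comp fg); apply/inS_tgt/act_inS.
Qed.

Lemma act_full_comp a : inS one (ginv g) a -> act (comp f g) a = act f (act g a).
Proof. by move=> dom_a; case: (act_comp fg dom_a (range_g_in_dom_f dom_a)). Qed.

Lemma one_ginv_full_comp : one (ginv (comp f g)) = one (ginv g).
Proof. by apply: ideal_eq_one => a; apply: inS_ginv_full_comp. Qed.

Lemma one_full_comp : one (comp f g) = act f (one g).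
Proof. by rewrite -act_one one_ginv_full_comp act_full_comp ?act_one //; apply: inS_one. Qed.

Lemma fixes_full_comp a : fixes f a -> fixes g a -> fixes (comp f g) a.
Proof.
case: (ff) => ft fi; rewrite /fixes one_ginv_full_comp act_full_comp; last exact: inS_mulr.
have dom_f_g : inS one (ginv f) (one g) by rewrite /inS fi fg; apply/inS_tgt/inS_one.
move=> fix_f ->; rewrite mul_one_tgt -fg -fi actM //; last exact: inS_mulr.
by rewrite fix_f -one_full_comp ft -(tgt_comp fg) -mul_one_tgt.
Qed.

End FullComp.

Lemma full_comp f g : full f -> full g -> src f = tgt g -> full (comp f g).
Proof.
move=> ff [gt gi] fg; split; last by rewrite one_ginv_full_comp // src_comp.
by rewrite one_full_comp // tgt_comp // gt -fg; case: ff => ft <-; rewrite act_one.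
Qed.

Lemma fixes_comp_full f g a : full f -> src g = tgt f ->
  fixes f a -> fixes g a -> fixes (comp g f) a.
Proof.
move=> ff gf fix_f fix_g; rewrite -[comp g f]ginvK ginv_comp //.
apply/fixes_ginv/fixes_full_comp; rewrite ?src_ginv ?tgt_ginv //.
- exact: full_ginv.
- exact: fixes_ginv.
- exact: fixes_ginv.
Qed.

Lemma fixes_gconj f g f' a : full f -> full f' -> tgt f = tgt g -> src g = tgt f' ->
  fixes f a -> fixes f' a -> fixes (gconj f g f') a <-> fixes g a.
Proof.
move=> ff ff' fg gf' fix_f fix_f'; split=> [fix_c|fix_g].
  rewrite -(gconjK fg gf'); apply: fixes_full_comp => //.
    by rewrite tgt_comp ?tgt_gconj // tgt_ginv src_gconj.
  apply: fixes_comp_full; rewrite ?tgt_ginv ?src_gconj //.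
    exact: full_ginv.
  exact: fixes_ginv.
apply: fixes_full_comp; rewrite ?src_ginv ?tgt_comp //.
- exact: full_ginv.
- exact: fixes_ginv.
exact: fixes_comp_full.
Qed.

Lemma G_fix_idm T x : G_fix one act T (idm x).
Proof. by move=> t _; exact: (fixes_idm x t). Qed.

Lemma G_fix_ginv T g : G_fix one act T g -> G_fix one act T (ginv g).
Proof. by move=> fix_g t /fix_g /fixes_ginv. Qed.

Section DirectSum.
Hypothesis dsd : direct_sum_decomp one.

Lemma one_idm_orth x y : x != y -> e x * e y = 0.
Proof.
move=> xy; case: dsd => _ /(_ (fun v => if v == x then e x * e y
                                       else if v == y then - (e x * e y) else 0)).
have yx : (y == x) = false by rewrite eq_sym; apply/negbTE.
move/(_ _ _ x); rewrite eqxx; apply.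
  move=> v; case: eqP => [->|_]; first by exists (e y); rewrite one_central.
  by case: eqP => [->|_]; [exists (- e x); rewrite mulNr | apply: inS0].
rewrite (bigD1 x) // (bigD1 y) 1?eq_sym //= big1 => [|v /andP[/negbTE -> /negbTE ->]] //.
by rewrite eqxx yx eqxx addr0 subrr.
Qed.

Lemma sum_mul_one_idm (c : Ob G -> R) y : (forall v, inS one (idm v) (c v)) ->
  (\sum_v c v) * e y = c y.
Proof.
move=> Sc; rewrite mulr_suml (bigD1 y) //= big1 ?addr0; first exact/inSE.
by move=> v vy; move/inSE: (Sc v) => <-; rewrite -mulrA one_idm_orth ?mulr0.
Qed.

Section FixedRing.
Variable H : Mor G -> Prop.
Hypothesis wsH : wSub one H.

Local Notation T := (fixed_ring one act H (fun _ => True)).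
Local Notation Ty y := (fixed_ring one act (isotropy (component H y) y) (inS one (idm y))).
Local Notation GT := (G_fix one act T).

Let wH : wide_subgroupoid H. Proof. by case: wsH. Qed.
Let sH : subgroupoid H. Proof. by case: wH. Qed.

Lemma H_sub_G_fix g : H g -> GT g.
Proof. by move=> Hg t [_]; apply. Qed.

Definition transversal y (F : Ob G -> Mor G) :=
  forall v, hrel H y v -> [/\ H (F v), full (F v), src (F v) = y & tgt (F v) = v].

Lemma exists_transversal y : exists F, transversal y F.
Proof.
case: wsH => _ /(_ y) [x [_ [tau [_ tau_tr]]]].
have tau_full v : hrel H y v ->
    [/\ H (tau v), full (tau v), src (tau v) = x & tgt (tau v) = v].
  case/tau_tr=> [[Htau _] [stau [ttau [dom ran]]]].
  by split=> //; split; rewrite ?stau ?ttau; apply: ideal_eq_one.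
have [Hy fy sy ty] := tau_full y (hrel_refl y wH).
exists (fun v => comp (tau v) (ginv (tau y))) => v /tau_full [Hv fv sv tv].
have vy : src (tau v) = tgt (ginv (tau y)) by rewrite tgt_ginv sy.
split; rewrite ?src_comp ?tgt_comp ?src_ginv //.
- by apply: subgroupoid_comp => //; apply: subgroupoid_inv.
- by apply: full_comp => //; apply: full_ginv.
Qed.

Section Loop.
Variables (y : Ob G) (F : Ob G -> Mor G).
Hypothesis trF : transversal y F.

Definition loop g := gconj (F (tgt g)) g (F (src g)).

Section Ends.
Variable g : Mor G.
Hypotheses (ys : hrel H y (src g)) (yt : hrel H y (tgt g)).

Let tgt_F : tgt (F (tgt g)) = tgt g. Proof. by case: (trF yt). Qed.
Let src_F : src g = tgt (F (src g)). Proof. by case: (trF ys). Qed.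

Lemma src_loop : src (loop g) = y.
Proof. by rewrite src_gconj //; case: (trF ys). Qed.

Lemma tgt_loop : tgt (loop g) = y.
Proof. by rewrite tgt_gconj //; case: (trF yt). Qed.

Lemma H_loop : H (loop g) <-> H g.
Proof. by apply: subgroupoid_gconj => //; [case: (trF yt) | case: (trF ys)]. Qed.

Lemma fixes_loop a : fixes (F (tgt g)) a -> fixes (F (src g)) a ->
  fixes (loop g) a <-> fixes g a.
Proof. by move=> *; apply: fixes_gconj => //; [case: (trF yt) | case: (trF ys)]. Qed.

Lemma G_fix_loop : GT (loop g) <-> GT g.
Proof.
have HF v : hrel H y v -> GT (F v) by case/trF=> HFv *; apply: H_sub_G_fix.
by split=> fix_g t Tt; apply/(fixes_loop (HF _ yt t Tt) (HF _ ys t Tt))/fix_g.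
Qed.

End Ends.

Lemma loop_comp g h : hrel H y (src h) -> hrel H y (tgt h) -> hrel H y (tgt g) ->
  src g = tgt h -> loop (comp g h) = comp (loop g) (loop h).
Proof.
move=> ys yt ytg gh; rewrite /loop src_comp ?tgt_comp // gh gconj_comp //.
- by case: (trF ytg).
- by rewrite gh; case: (trF yt).
- by case: (trF yt).
- by case: (trF ys).
Qed.

End Loop.

Lemma isotropy_componentE y l : src l = y -> tgt l = y ->
  isotropy (component H y) y l <-> H l.
Proof.
move=> sl tl; split=> [[[]]|Hl] //.
by split=> //; split=> //; rewrite sl tl; split; apply: hrel_refl.
Qed.

Lemma fixed_ring_restrict y t : T t -> Ty y (t * e y).
Proof.
case=> _ Tt; split=> [|k [[Hk _] [sk tk]]]; first exact: inS_mulr.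
have ety : t * e y * e y = t * e y by rewrite -mulrA one_idem.
by apply/(eq_fixes (a' := t)); rewrite ?sk ?tk ?ety //; apply: Tt.
Qed.

Lemma fixed_ring_extend y b : Ty y b ->
  exists t, [/\ T t, t * e y = b & forall v, ~ hrel H y v -> t * e v = 0].
Proof.
case=> /inSE by_b fix_b; have [F trF] := exists_transversal y.
pose c v := if excluded_middle_informative (hrel H y v) is left _ then act (F v) b else 0.
have cE v : hrel H y v -> c v = act (F v) b.
  by rewrite /c; case: excluded_middle_informative.
have cN v : ~ hrel H y v -> c v = 0.
  by rewrite /c; case: excluded_middle_informative.
pose t := \sum_v c v.
have tc v : t * e v = c v.
  apply: sum_mul_one_idm => // w; rewrite /c; case: excluded_middle_informative => yw.
    case: (trF _ yw) => _ fF sF tF; have := act_inS_full (a := b) fF; rewrite sF tF; apply.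
    exact/inSE.
  exact: inS0.
have yy := hrel_refl y wH.
have ty : t * e y = b.
  case: (trF _ yy) => HFy [ft fi] sF tF; rewrite tc cE //.
  by have := fix_b _ (proj2 (isotropy_componentE sF tF) HFy); rewrite fi ft sF tF by_b.
have fix_F v : hrel H y v -> fixes (F v) t.
  by move=> yv; case: (trF _ yv) => _ [ft fi] sF tF; rewrite /fixes fi ft sF tF ty tc cE.
exists t; split=> // [|v /cN <-]; last exact: tc.
split=> // h Hh; have [ys | nys] := classic (hrel H y (src h)).
  have yt : hrel H y (tgt h) by apply: (hrel_trans sH ys); exists h.
  apply/(fixes_loop trF ys yt (fix_F _ yt) (fix_F _ ys)).
  have [sl tl] := (src_loop trF ys yt, tgt_loop trF ys yt).
  apply/(eq_fixes (a' := b)); rewrite ?sl ?tl ?ty ?by_b //.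
  by apply/fix_b/(isotropy_componentE sl tl)/(H_loop trF ys yt).
have nyt : ~ hrel H y (tgt h).
  by move=> yt; apply/nys/(hrel_trans sH yt)/(hrel_sym sH); exists h.
by apply/(eq_fixes (a' := 0)); rewrite ?mul0r ?tc ?cN // /fixes !mul0r act0.
Qed.

Lemma Gy_fixE y l : src l = y -> tgt l = y -> Gy_fix one act y (Ty y) l <-> GT l.
Proof.
move=> sl tl; split=> [[_ [_ fix_l]] t Tt | fix_l].
  apply/(@eq_fixes l t (t * e y)); rewrite ?sl ?tl -?mulrA ?one_idem //.
  exact/fix_l/fixed_ring_restrict.
split=> //; split=> // b Tyb; have [t [Tt ty _]] := fixed_ring_extend Tyb.
have /inSE by_b : inS one (idm y) b by case: Tyb.
by apply/(@eq_fixes l b t); rewrite ?sl ?tl ?ty ?by_b //; apply: fix_l.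
Qed.

Lemma Gy_fix_loop y F g : transversal y F -> hrel H y (src g) -> hrel H y (tgt g) ->
  Gy_fix one act y (Ty y) (loop F g) <-> GT g.
Proof.
move=> trF ys yt; rewrite (Gy_fixE (src_loop trF ys yt) (tgt_loop trF ys yt)).
exact: (G_fix_loop trF ys yt).
Qed.

Lemma fixed_ring1 : T 1.
Proof. by split=> // h _; rewrite /fixes !mul1r act_one. Qed.

(** [g] cannot fix an element of [T] that is [1] on the component of [src g] and [0]
    on that of [tgt g], since [alpha_g(1_(g^-1)) = 1_g <> 0]. *)
Lemma G_fix_hrel (one_neq0 : forall g, one g != 0) g : GT g -> hrel H (src g) (tgt g).
Proof.
move=> fix_g; apply: NNPP => nst.
have [t [Tt ts tN]] := fixed_ring_extend (fixed_ring_restrict (src g) fixed_ring1).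
have := fix_g t Tt; rewrite /fixes mul_one_src ts -mul_one_src mul1r act_one.
by rewrite mul_one_tgt tN // mul0r => one_g0; move: (one_neq0 g); rewrite one_g0 eqxx.
Qed.

Lemma Gy_fix_subgroup y :
  (forall g h, GT g -> GT h -> src g = tgt h -> GT (comp g h)) ->
  isotropy_subgroup y (Gy_fix one act y (Ty y)).
Proof.
move=> G_fix_comp; split; first by move=> l [sl [tl _]].
split; first exact/(Gy_fixE (src_idm y) (tgt_idm y))/G_fix_idm.
split=> [l m /[dup] Gl [sl [tl _]] /[dup] Gm [sm [tm _]] | l /[dup] Gl [sl [tl _]]].
  have lm : src l = tgt m by rewrite sl tm.
  have slm : src (comp l m) = y by rewrite src_comp.
  have tlm : tgt (comp l m) = y by rewrite tgt_comp.
  apply/(Gy_fixE slm tlm)/G_fix_comp => //.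
    exact/(Gy_fixE sl tl).
  exact/(Gy_fixE sm tm).
have sli : src (ginv l) = y by rewrite src_ginv.
have tli : tgt (ginv l) = y by rewrite tgt_ginv.
exact/(Gy_fixE sli tli)/G_fix_ginv/(Gy_fixE sl tl).
Qed.

Section Representatives.
Hypothesis one_neq0 : forall g, one g != 0.
Variable rep : Ob G -> Prop.
Hypothesis reps : forall v, exists2 y, rep y & hrel H y v.

Lemma G_fix_rep g : GT g -> exists y, [/\ rep y, hrel H y (src g) & hrel H y (tgt g)].
Proof.
move=> fix_g; have [y ry ys] := reps (src g).
by exists y; split=> //; apply: hrel_trans ys (G_fix_hrel one_neq0 fix_g).
Qed.

Lemma G_fix_comp_of_subgroups :
  (forall y, rep y -> isotropy_subgroup y (Gy_fix one act y (Ty y))) ->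
  forall g h, GT g -> GT h -> src g = tgt h -> GT (comp g h).
Proof.
move=> Gy_sub g h fix_g fix_h gh.
have [y [ry ys yt]] := G_fix_rep fix_h; have [F trF] := exists_transversal y.
have ysg : hrel H y (src g) by rewrite gh.
have ytg : hrel H y (tgt g) by apply: (hrel_trans sH ysg); apply: G_fix_hrel.
have ys' : hrel H y (src (comp g h)) by rewrite src_comp.
have yt' : hrel H y (tgt (comp g h)) by rewrite tgt_comp.
have [_ [_ [Gy_comp _]]] := Gy_sub y ry.
apply/(Gy_fix_loop trF ys' yt'); rewrite (loop_comp trF ys yt ytg gh).
by apply: Gy_comp; [apply/(Gy_fix_loop trF ysg ytg) | apply/(Gy_fix_loop trF ys yt)].
Qed.

Lemma wide_G_fixP (x0 : Ob G) : wide_subgroupoid GT <->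
  (forall y, rep y -> isotropy_subgroup y (Gy_fix one act y (Ty y))).
Proof.
split=> [[[_ [G_fix_comp _]] _] y _ | Gy_sub]; first exact: Gy_fix_subgroup.
split; last exact: G_fix_idm.
split; first by exists (idm x0); apply: G_fix_idm.
by split; [apply: G_fix_comp_of_subgroups | apply: G_fix_ginv].
Qed.

Lemma G_fix_eqP : (forall g, GT g <-> H g) <->
  (forall y, rep y -> forall l,
     Gy_fix one act y (Ty y) l <-> isotropy (component H y) y l).
Proof.
split=> [GT_H y _ l | Gy_iso g].
  split=> [/[dup] [[sl [tl _]]] | /[dup] [[_ [sl tl]]]].
    by rewrite Gy_fixE // isotropy_componentE // GT_H.
  by rewrite Gy_fixE // isotropy_componentE // GT_H.
split=> [fix_g|]; last exact: H_sub_G_fix.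
have [y [ry ys yt]] := G_fix_rep fix_g; have [F trF] := exists_transversal y.
apply/(H_loop trF ys yt)/(isotropy_componentE (src_loop trF ys yt) (tgt_loop trF ys yt)).
exact/(Gy_iso y ry)/(Gy_fix_loop trF ys yt).
Qed.

End Representatives.

End FixedRing.

End DirectSum.

End PartialAction.

Theorem proposition4p3 (G : groupoid) (R : pzRingType)
    (one : Mor G -> R) (act : Mor G -> R -> R)
    (H : Mor G -> Prop) (rep : Ob G -> Prop) :
  connected G ->
  direct_sum_decomp one ->
  unital_partial_action one act ->
  group_type_on one (fun _ => True) (fun _ => True) ->
  (forall g, one g != 0) ->
  wSub one H ->
  (* rep = {y_1, ..., y_r}: exactly one chosen object in each component of H *)
  (forall y, exists z, rep z /\ hrel H z y /\
                       forall z', rep z' -> hrel H z' y -> z' = z) ->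
  let T := fixed_ring one act H (fun _ => True) in
  let Ty := fun y => fixed_ring one act (isotropy (component H y) y)
                                (inS one (idm y)) in
  (wide_subgroupoid (G_fix one act T) <->
     (forall y, rep y -> isotropy_subgroup y (Gy_fix one act y (Ty y)))) /\
  ((forall g, G_fix one act T g <-> H g) <->
     (forall y, rep y -> forall l,
        Gy_fix one act y (Ty y) l <-> isotropy (component H y) y l)).
Proof.
move=> _ dsd upa [x0 _] one_neq0 wsH reps T Ty.
have reps' v : exists2 y, rep y & hrel H y v by have [y [ry [yv _]]] := reps v; exists y.
split; [exact: wide_G_fixP x0 | exact: G_fix_eqP].
Qed.
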